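(* Let $\mathcal M$ be the set of pairs of measurable functions $(\mu(\cdot),\sigma(\cdot))$ from $[0,1]$ into $D$. Then $$\inf_{(\mu,\sigma)\in\mathcal M}\frac{\Big(\int_0^1\big(h_0\mu(\omega)+h_1\sigma(\omega)\big)\,d\omega\Big)^2}{\int_0^1\big(\mu^2(\omega)+\sigma^2(\omega)\big)\,d\omega}=\min_{(x,y)\in D}\psi(x,y),$$ and the infimum on the left is attained.
   Context: Let $0<\mu_-<\mu_+$ and $0<\sigma_-<\sigma_+$ be real numbers, $D=[\mu_-,\mu_+]\times[\sigma_-,\sigma_+]$, and $h_0,h_1\in\mathbb R$. Write $\mu_M=(\mu_++\mu_-)/2$ and $\sigma_M=(\sigma_++\sigma_-)/2$. For $(x,y)\in D$ let $$\psi(x,y)=\frac{(h_0x+h_1y)^2}{2\mu_Mx+2\sigma_My-\mu_-\mu_+-\sigma_-\sigma_+};$$ the denominator is positive on $D$. *)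

From HB Require Import structures.
From mathcomp Require Import all_boot all_order all_algebra.
From mathcomp Require Import all_classical all_reals all_analysis.
Set Implicit Arguments. Unset Strict Implicit. Unset Printing Implicit Defensive.
Import Order.TTheory GRing.Theory Num.Theory.
Local Open Scope classical_set_scope.
Local Open Scope ring_scope.

Definition inD (R : realType) (mum mup sm sp : R) (x y : R) : Prop :=
  mum <= x <= mup /\ sm <= y <= sp.

Definition psi (R : realType) (mum mup sm sp h0 h1 : R) (x y : R) : R :=
  let muM := (mup + mum) / 2 in
  let sigM := (sp + sm) / 2 in
  (h0 * x + h1 * y) ^+ 2 /
    (2 * muM * x + 2 * sigM * y - mum * mup - sm * sp).

Definition inM (R : realType) (mum mup sm sp : R) (mu sigma : R -> R) : Prop :=
  measurable_fun (`[0%R, 1%R] : set R) mu /\ measurable_fun (`[0%R, 1%R] : set R) sigma /\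
  (forall w : R, 0 <= w <= 1 -> inD mum mup sm sp (mu w) (sigma w)).

Definition ratioM (R : realType) (h0 h1 : R) (mu sigma : R -> R) : R :=
  (Rintegral (@lebesgue_measure R) (`[0%R, 1%R] : set R) (fun w => h0 * mu w + h1 * sigma w)) ^+ 2 /
  Rintegral (@lebesgue_measure R) (`[0%R, 1%R] : set R) (fun w => mu w ^+ 2 + sigma w ^+ 2).

From HB Require Import structures.
From mathcomp Require Import all_boot all_order all_algebra.
From mathcomp Require Import all_classical all_reals all_analysis.
From mathcomp Require Import lra ring.
Import Order.TTheory GRing.Theory Num.Theory.
Import numFieldNormedType.Exports numFieldTopology.Exports.
Set Implicit Arguments. Unset Strict Implicit. Unset Printing Implicit Defensive.
Local Open Scope classical_set_scope.
Local Open Scope ring_scope.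

(** On [a, b] the parabola x^2 lies below its chord (a + b) x - a b, with
    equality exactly at the endpoints.  Hence for (mu, sigma) in M with means
    X, Y the denominator of the ratio is at most the denominator of psi(X, Y),
    while the numerator is (h0 X + h1 Y)^2; so the ratio is at least
    psi(X, Y) >= min psi.  Conversely, functions taking only endpoint values
    and having prescribed means (X0, Y0) realise psi(X0, Y0) exactly. *)

Definition sqr_chord {R : numDomainType} (a b x : R) : R := (a + b) * x - a * b.

Section sqr_chord.
Variable R : realFieldType.
Implicit Types a b x : R.

Lemma sqr_le_chord a b x : a <= x <= b -> x ^+ 2 <= sqr_chord a b x.
Proof. by move=> /andP[ax xb]; rewrite /sqr_chord; nra. Qed.

Lemma sqr_chord_endpoint a b x : x = a \/ x = b -> x ^+ 2 = sqr_chord a b x.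
Proof. by rewrite /sqr_chord => -[] ->; ring. Qed.

Lemma sqr_chord_gt0 a b x : 0 < a -> a <= b -> a <= x -> 0 < sqr_chord a b x.
Proof. by move=> a0 ab ax; rewrite /sqr_chord; nra. Qed.

End sqr_chord.

Lemma psiE (R : realType) (mum mup sm sp h0 h1 x y : R) :
  psi mum mup sm sp h0 h1 x y =
  (h0 * x + h1 * y) ^+ 2 / (sqr_chord mum mup x + sqr_chord sm sp y).
Proof. by rewrite /psi /sqr_chord; congr (_ / _); field. Qed.

Section mean_over_unit_mass.
Context d (T : measurableType d) (R : realType).
Variables (P : {measure set T -> \bar R}) (I : set T).
Hypotheses (mI : measurable I) (PI : P I = 1%E).
Implicit Types (f g : T -> R) (a b : R).

Lemma integrable_itv_valued a b f : measurable_fun I f ->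
  (forall w, I w -> a <= f w <= b) -> P.-integrable I (EFin \o f).
Proof.
move=> mf fab; apply: measurable_bounded_integrable => //; first by rewrite PI ltry.
exists (`|a| + `|b|); split; first exact: num_real.
move=> M abM w /fab /andP[aw wb] /=; apply/ltW/(le_lt_trans _ abM).
by rewrite ler_norml; apply/andP; split;
  [have := ler_norm (- a); rewrite normrN|have := ler_norm b]; 
  have := normr_ge0 a; have := normr_ge0 b; lra.
Qed.

Lemma integrable_cst_mass1 r : P.-integrable I (EFin \o fun=> r).
Proof. by apply: (@integrable_itv_valued r r); [exact: measurable_cst|rewrite lexx]. Qed.

Lemma Rintegral_cst_mass1 r : \int[P]_(w in I) r = r.
Proof. by rewrite Rintegral_cst // PI mulr1. Qed.

Lemma Rintegral_itv_valued a b f : measurable_fun I f ->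
  (forall w, I w -> a <= f w <= b) -> a <= \int[P]_(w in I) f w <= b.
Proof.
move=> mf fab; have fi := integrable_itv_valued mf fab.
have csti := integrable_cst_mass1.
apply/andP; split.
- rewrite -[leLHS](Rintegral_cst_mass1 a); apply: le_Rintegral => // w.
  by case/fab/andP.
- rewrite -[leRHS](Rintegral_cst_mass1 b); apply: le_Rintegral => // w.
  by case/fab/andP.
Qed.

Lemma integrable_affine2 f g p q r :
  P.-integrable I (EFin \o f) -> P.-integrable I (EFin \o g) ->
  P.-integrable I (EFin \o fun w => p * f w + q * g w + r).
Proof.
move=> fi gi; have pfi := integrableZl mI p fi; have qgi := integrableZl mI q gi.
by apply: (integrableD mI (integrableD mI pfi qgi) (integrable_cst_mass1 r)).
Qed.

Lemma Rintegral_affine2 f g p q r :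
  P.-integrable I (EFin \o f) -> P.-integrable I (EFin \o g) ->
  \int[P]_(w in I) (p * f w + q * g w + r) =
  p * \int[P]_(w in I) f w + q * \int[P]_(w in I) g w + r.
Proof.
move=> fi gi; have pfi := integrableZl mI p fi; have qgi := integrableZl mI q gi.
rewrite RintegralD //; last exact: integrable_cst_mass1.
  by rewrite RintegralD // !RintegralZl // Rintegral_cst_mass1.
by apply: (integrableD mI pfi qgi).
Qed.

End mean_over_unit_mass.

Section unit_interval.
Variable R : realType.
Local Notation lam := (@lebesgue_measure R).
Local Notation I01 := (`[0%R, 1%R]%classic : set R).

Lemma lebesgue_measure_itv01 : lam I01 = 1%E.
Proof. by rewrite lebesgue_measure_itv /= lte_fin ltr01 oppr0 adde0. Qed.

Lemma Rintegral_indic_itv0 t : 0 <= t <= 1 -> \int[lam]_(w in I01) \1_(`[0, t]) w = t.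
Proof.
move=> /andP[t0 t1]; rewrite /Rintegral integral_indic //= setIidl; last first.
  by move=> w; rewrite /= !in_itv /= => /andP[-> /le_trans ->].
rewrite lebesgue_measure_itv /= lte_fin.
case: (ltP 0 t) => [_|t_le0]; first by rewrite /= oppr0 addr0.
by apply/esym/le_anti; rewrite t0 t_le0.
Qed.

Lemma two_valued_with_mean lo hi z : lo < hi -> lo <= z <= hi ->
  exists f : R -> R, [/\ measurable_fun I01 f, forall w, f w = lo \/ f w = hi
                       & \int[lam]_(w in I01) f w = z].
Proof.
move=> lohi /andP[loz zhi]; have hilo : 0 < hi - lo by rewrite subr_gt0.
pose t := (z - lo) / (hi - lo).
have t01 : 0 <= t <= 1.
  by rewrite divr_ge0 ?subr_ge0 ?ler_pdivrMr // ?mul1r; lra.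
have mI01 : measurable I01 by [].
have lam_int := integrable_itv_valued (P := lam) mI01 lebesgue_measure_itv01.
have lam_cst := Rintegral_cst_mass1 (P := lam) mI01 lebesgue_measure_itv01.
have mind : measurable_fun I01 (\1_(`[0, t]) : R -> R).
  by apply: measurable_realfun.measurable_indic; exact: measurable_itv.
have ind01 w : \1_(`[0, t]) w = 0 :> R \/ \1_(`[0, t]) w = 1 :> R.
  by rewrite /indic; case: (_ \in _); [right|left].
have indi : lam.-integrable I01 (EFin \o \1_(`[0, t])).
  by apply: (lam_int 0 1) => // w _; case: (ind01 w) => ->; rewrite ?lexx ler01.
exists (fun w => lo + (hi - lo) * \1_(`[0, t]) w); split.
- apply: measurable_realfun.measurable_funD; first exact: measurable_cst.
  exact: measurable_realfun.measurable_funM (measurable_cst _) mind.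
- by move=> w; case: (ind01 w) => ->; [left|right]; ring.
- have scaled_indi : lam.-integrable I01 (EFin \o fun w => (hi - lo) * \1_(`[0, t]) w).
    apply: (lam_int 0 (hi - lo)).
      exact: measurable_realfun.measurable_funM (measurable_cst _) mind.
    by move=> w _; case: (ind01 w) => ->; rewrite ?mulr0 ?mulr1 lexx ?ltW.
  rewrite RintegralD //.
    rewrite RintegralZl // Rintegral_indic_itv0 //.
    by rewrite lam_cst /t; field; lra.
  exact: (integrable_cst_mass1 (P := lam) mI01 lebesgue_measure_itv01).
Qed.
End unit_interval.

Section mean_reduction.
Variables (R : realType) (mum mup sm sp h0 h1 : R).
Hypotheses (mum_gt0 : 0 < mum) (sm_gt0 : 0 < sm) (mum_le : mum <= mup) (sm_le : sm <= sp).
Local Notation lam := (@lebesgue_measure R).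
Local Notation I01 := (`[0%R, 1%R]%classic : set R).
Local Notation D := (inD mum mup sm sp).
Local Notation psi := (psi mum mup sm sp h0 h1).
Local Notation mean f := (\int[lam]_(w in I01) f w).

Lemma psi_denom_gt0 x y : D x y -> 0 < sqr_chord mum mup x + sqr_chord sm sp y.
Proof.
move=> [/andP[mx xM] /andP[sy yS]].
by rewrite addr_gt0 // sqr_chord_gt0 // ?(le_trans mx xM) ?(le_trans sy yS).
Qed.

Lemma continuous_psi (p : R * R) : D p.1 p.2 ->
  {for p, continuous (fun q : R * R => psi q.1 q.2)}.
Proof.
move=> /psi_denom_gt0 den_gt0.
have -> : (fun q : R * R => psi q.1 q.2) = fun q =>
    (h0 * q.1 + h1 * q.2) ^+ 2 / (sqr_chord mum mup q.1 + sqr_chord sm sp q.2).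
  by apply: funext => q; rewrite psiE.
have lin u v : {for p, continuous (fun q : R * R => u * q.1 + v * q.2)}.
  by apply: cvgD; apply: cvgM; [exact: cvg_cst|exact: cvg_fst|exact: cvg_cst|exact: cvg_snd].
have chord a b (g : R * R -> R) : {for p, continuous g} ->
    {for p, continuous (fun q => sqr_chord a b (g q))}.
  by move=> gc; apply: cvgB; [apply: cvgM; [exact: cvg_cst|]|exact: cvg_cst].
apply: cvgM; first by rewrite expr2; apply: cvgM; exact: lin.
apply: cvgV; first by rewrite gt_eqF.
by apply: cvgD; apply: chord; [exact: cvg_fst|exact: cvg_snd].
Qed.

Lemma psi_has_min : exists x0 y0, D x0 y0 /\ forall x y, D x y -> psi x0 y0 <= psi x y.
Proof.
pose A : set (R * R) := `[mum, mup] `*` `[sm, sp].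
have inA q : q \in A <-> D q.1 q.2.
  by rewrite inE /A /= !in_itv.
have A0 : A !=set0 by exists (mum, sm); rewrite /A /= !in_itv /= !lexx.
have cA : compact A by apply: compact_setX; exact: segment_compact.
have psic : {within A, continuous (fun q : R * R => psi q.1 q.2)}.
  by apply: continuous_in_subspaceT => q /inA; exact: continuous_psi.
have [[x0 y0] /inA D0 psi_min] := compact_EVT_min A0 cA psic.
by exists x0, y0; split => // x y Dxy; apply: (psi_min (x, y)); apply/inA.
Qed.

Let mI01 : measurable I01 := measurable_itv _.
Let integrable01 := integrable_itv_valued (P := lam) mI01 (@lebesgue_measure_itv01 R).
Let Rintegral01_itv_valued :=
  Rintegral_itv_valued (P := lam) mI01 (@lebesgue_measure_itv01 R).
Let Rintegral01_affine2 := Rintegral_affine2 (P := lam) mI01 (@lebesgue_measure_itv01 R).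

Lemma Rintegral01_lin2 mu sigma :
  lam.-integrable I01 (EFin \o mu) -> lam.-integrable I01 (EFin \o sigma) ->
  mean (fun w => h0 * mu w + h1 * sigma w) = h0 * mean mu + h1 * mean sigma.
Proof.
move=> mui sigmai; rewrite -[RHS]addr0 -Rintegral01_affine2 //.
by apply: eq_Rintegral => w _; rewrite addr0.
Qed.

Let integrable01_affine2 :=
  integrable_affine2 (P := lam) mI01 (@lebesgue_measure_itv01 R).

Lemma integrable01_sqr_chord mu sigma :
  lam.-integrable I01 (EFin \o mu) -> lam.-integrable I01 (EFin \o sigma) ->
  lam.-integrable I01 (EFin \o fun w => sqr_chord mum mup (mu w) + sqr_chord sm sp (sigma w)).
Proof.
move=> mui sigmai; apply: eq_integrable (integrable01_affine2 (mum + mup) (sm + sp)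
  (- (mum * mup) - sm * sp) mui sigmai) => // w _.
by rewrite /sqr_chord /=; congr EFin; ring.
Qed.

Lemma Rintegral01_sqr_chord mu sigma :
  lam.-integrable I01 (EFin \o mu) -> lam.-integrable I01 (EFin \o sigma) ->
  mean (fun w => sqr_chord mum mup (mu w) + sqr_chord sm sp (sigma w)) =
  sqr_chord mum mup (mean mu) + sqr_chord sm sp (mean sigma).
Proof.
move=> mui sigmai; rewrite /sqr_chord.
have -> : forall X Y, (mum + mup) * X - mum * mup + ((sm + sp) * Y - sm * sp) =
    (mum + mup) * X + (sm + sp) * Y + (- (mum * mup) - sm * sp) by move=> *; ring.
by rewrite -Rintegral01_affine2 //; apply: eq_Rintegral => w _; ring.
Qed.

Lemma mean_inD mu sigma : inM mum mup sm sp mu sigma -> D (mean mu) (mean sigma).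
Proof.
move=> [mmu [msigma muD]]; have muD' w : I01 w -> D (mu w) (sigma w).
  by rewrite /= in_itv; exact: muD.
split; apply: Rintegral01_itv_valued => // w /muD' [] //.
Qed.

Lemma psi_mean_le_ratioM mu sigma :
  inM mum mup sm sp mu sigma -> psi (mean mu) (mean sigma) <= ratioM h0 h1 mu sigma.
Proof.
move=> Mmu; have [mmu [msigma muD]] := Mmu.
have muD' w : I01 w -> D (mu w) (sigma w) by rewrite /= in_itv; exact: muD.
have mui : lam.-integrable I01 (EFin \o mu).
  by apply: (integrable01 (a := mum) (b := mup) mmu) => w /muD' [].
have sigmai : lam.-integrable I01 (EFin \o sigma).
  by apply: (integrable01 (a := sm) (b := sp) msigma) => w /muD' [].
pose sq w := mu w ^+ 2 + sigma w ^+ 2.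
have msq : measurable_fun I01 sq.
  by apply: measurable_realfun.measurable_funD; apply: measurable_realfun.measurable_funX.
have sq_bounds w : I01 w -> mum ^+ 2 + sm ^+ 2 <= sq w <= mup ^+ 2 + sp ^+ 2.
  move=> /muD' [/andP[mu1 mu2] /andP[s1 s2]]; rewrite /sq.
  have sqr_le (u v : R) : 0 < u -> u <= v -> u ^+ 2 <= v ^+ 2.
    by move=> u0 uv; rewrite ler_pXn2r // nnegrE ltW // (lt_le_trans u0).
  by rewrite !lerD ?sqr_le // (lt_le_trans _ mu1, lt_le_trans _ s1).
have sqi : lam.-integrable I01 (EFin \o sq) := integrable01 msq sq_bounds.
have sq_mean_gt0 : 0 < mean sq.
  have /andP[+ _] := Rintegral01_itv_valued msq sq_bounds.
  by apply: lt_le_trans; rewrite addr_gt0 ?exprn_gt0.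
have sq_mean_le : mean sq <= sqr_chord mum mup (mean mu) + sqr_chord sm sp (mean sigma).
  rewrite -Rintegral01_sqr_chord //; apply: le_Rintegral => //.
    exact: integrable01_sqr_chord.
  by move=> w /muD' [? ?]; rewrite lerD // sqr_le_chord.
rewrite psiE /ratioM Rintegral01_lin2 //.
apply: ler_wpM2l; first exact: sqr_ge0.
by rewrite lef_pV2 ?posrE ?(psi_denom_gt0 (mean_inD Mmu)).
Qed.

Lemma ratioM_two_valued mu sigma :
  measurable_fun I01 mu -> measurable_fun I01 sigma ->
  (forall w, mu w = mum \/ mu w = mup) -> (forall w, sigma w = sm \/ sigma w = sp) ->
  ratioM h0 h1 mu sigma = psi (mean mu) (mean sigma).
Proof.
move=> mmu msigma mu2 sigma2.
have mui : lam.-integrable I01 (EFin \o mu).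
  apply: (integrable01 (a := mum) (b := mup) mmu) => w _.
  by case: (mu2 w) => ->; rewrite lexx mum_le.
have sigmai : lam.-integrable I01 (EFin \o sigma).
  apply: (integrable01 (a := sm) (b := sp) msigma) => w _.
  by case: (sigma2 w) => ->; rewrite lexx sm_le.
rewrite psiE /ratioM Rintegral01_lin2 // -Rintegral01_sqr_chord //.
congr (_ / _); apply: eq_Rintegral => w _.
by rewrite (sqr_chord_endpoint (mu2 w)) (sqr_chord_endpoint (sigma2 w)).
Qed.

End mean_reduction.

Theorem mainTheorem3 (R : realType) (mum mup sm sp h0 h1 : R) :
  0 < mum -> mum < mup -> 0 < sm -> sm < sp ->
  exists x0 y0 : R,
    inD mum mup sm sp x0 y0 /\
    (forall x y, inD mum mup sm sp x y ->
       psi mum mup sm sp h0 h1 x0 y0 <= psi mum mup sm sp h0 h1 x y) /\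
    (forall mu sigma : R -> R, inM mum mup sm sp mu sigma ->
       psi mum mup sm sp h0 h1 x0 y0 <= ratioM (R:=R) h0 h1 mu sigma) /\
    (exists mu sigma : R -> R, inM mum mup sm sp mu sigma /\
       ratioM (R:=R) h0 h1 mu sigma = psi mum mup sm sp h0 h1 x0 y0).
Proof.
move=> mum_gt0 mum_lt sm_gt0 sm_lt.
have [mum_le sm_le] := (ltW mum_lt, ltW sm_lt).
have [x0 [y0 [[x0D y0D] psi_min]]] := psi_has_min h0 h1 mum_gt0 sm_gt0 mum_le sm_le.
exists x0, y0; split; first by split.
split=> //; split.
  move=> mu sigma Mmu; apply: le_trans (psi_min _ _ (mean_inD Mmu)) _.
  by apply: psi_mean_le_ratioM.
have [mu [mmu mu2 mu_mean]] := two_valued_with_mean mum_lt x0D.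
have [sigma [msigma sigma2 sigma_mean]] := two_valued_with_mean sm_lt y0D.
exists mu, sigma; split.
  split=> //; split=> // w _.
  by split; [case: (mu2 w) | case: (sigma2 w)] => ->; rewrite ?lexx ?mum_le ?sm_le.
by rewrite (ratioM_two_valued h0 h1 mum_le sm_le mmu msigma mu2 sigma2) mu_mean sigma_mean.
Qed.
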